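(* Let $X$ and $\Lambda$ be nonempty sets, $f: X\to\mathbb{R}$, and for each $\lambda\in\Lambda$ let $f_\lambda: X\to\mathbb{R}$, such that the feasible set $X_0:=\{x\in X:\ \sup_{\lambda\in\Lambda}f_\lambda(x)\le0\}$ is nonempty, $x^0\in X_0$ satisfies $f(x^0)=\inf_{x\in X_0}f(x)$, and $(f_\lambda(x))_{\lambda\in\Lambda}\in\ell^\infty(\Lambda)$ for every $x\in X$. Then there exist $\rho\ge0$ and $\Phi_0\in\ell^\infty(\Lambda)^*_+$ with $\rho+\Phi_0(\mathbf{1})=1$ such that the function $x\mapsto\rho f(x)+\Phi_0((f_\lambda(x))_{\lambda\in\Lambda})$ attains its infimum on $X$ at $x^0$ and $\Phi_0((f_\lambda(x^0))_{\lambda\in\Lambda})=0$, if and only if the family $(f_\lambda)_{\lambda\in\Lambda}\cup(f-f(x^0))$ is infsup-convex on $X$.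
   Context: $\ell^\infty(\Lambda)$ is the Banach space of bounded real functions on $\Lambda$ (sup-norm), $\ell^\infty(\Lambda)^*_+$ the cone of positive continuous linear functionals on it, and $\mathbf{1}$ the constant function $1$ on $\Lambda$. The family $(f_\lambda)_{\lambda\in\Lambda}\cup(f-f(x^0))$ is the family indexed by $\Lambda\cup\{\mu\}$ ($\mu\notin\Lambda$) whose $\mu$-th member is $f-f(x^0)$. With $\Delta_m:=\{\mathbf t\in\mathbb{R}^m: t_j\ge0,\sum t_j=1\}$, a family $(g_i)_{i\in I}$ of real functions on $X$ is infsup-convex on $X$ if for all $m\ge1$, $\mathbf{t}\in\Delta_m$, $x_1,\dots,x_m\in X$: $\inf_{x\in X}\sup_{i\in I}g_i(x)\le\sup_{i\in I}\sum_{j=1}^m t_j g_i(x_j)$. *)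

From mathcomp Require Import all_boot all_order all_algebra.
From mathcomp Require Import all_classical all_reals ereal.
Set Implicit Arguments. Unset Strict Implicit. Unset Printing Implicit Defensive.
Import Order.TTheory GRing.Theory Num.Theory.
Local Open Scope ring_scope.
Local Open Scope classical_set_scope.

Definition linfty {R : realType} {L : Type} (g : L -> R) : Prop :=
  exists M : R, forall l, `|g l| <= M.

(* Phi is given as a map on all of L -> R; only its values on l^infty(L) matter. *)
Definition pos_dual_linfty {R : realType} {L : Type} (Phi : (L -> R) -> R) : Prop :=
  [/\ (forall (a b : R) (g h : L -> R), linfty g -> linfty h ->
         Phi (fun l => a * g l + b * h l) = a * Phi g + b * Phi h),
      (exists C : R, forall (g : L -> R) (M : R),
         linfty g -> (forall l, `|g l| <= M) -> `|Phi g| <= C * M)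
    & (forall g : L -> R, linfty g -> (forall l, 0 <= g l) -> 0 <= Phi g)].

Definition infsup_convex {R : realType} {I X : Type} (g : I -> X -> R) : Prop :=
  forall (m : nat) (t : 'I_m -> R) (xs : 'I_m -> X),
    (0 < m)%N -> (forall j, 0 <= t j) -> \sum_(j < m) t j = 1 ->
    (ereal_inf [set ereal_sup [set (g i x)%:E | i in [set: I]] | x in [set: X]]
      <= ereal_sup [set (\sum_(j < m) t j * g i (xs j))%:E | i in [set: I]])%E.

(* the family (f_l)_{l in L} u (f - f x0), indexed by option L (None = mu) *)
Definition adjoin_family {R : realType} {L X : Type}
  (fl : L -> X -> R) (f : X -> R) (x0 : X) : option L -> X -> R :=
  fun o x => match o with Some l => fl l x | None => f x - f x0 end.

Definition feasible {R : realType} {L X : Type} (fl : L -> X -> R) : set X :=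
  [set x | (ereal_sup [set (fl l x)%:E | l in [set: L]] <= 0)%E].

(* If multipliers exist, averaging the inequality
   rho f(x0) + Phi0(f_l(x0)) <= rho f(x) + Phi0(f_l(x)) over x_1, ..., x_m with
   weights t_j shows that the averaged family has a nonnegative supremum, while
   x0 itself makes the inf-sup nonpositive.
   Conversely, optimality of x0 makes the inf-sup of the adjoined family
   nonnegative, and infsup-convexity then says that the sublinear functional
   q(h) = sup_i h(i) on l^oo(L + {mu}) is nonnegative on the convex cone spanned
   by the vectors G(x) = (g_i(x))_i.  A Hahn-Banach theorem relative to a cone
   (Zorn's lemma on graphs of dominated partial functionals) gives a linear phi
   with phi(h) <= q(h + k) for every k in the cone; so phi is positive,
   normalised, and nonnegative on each G(x).  Its mu-coordinate rho and its
   restriction Phi0 to l^oo(L) are the multipliers, and Phi0(f_l(x0)) = 0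
   because x0 is feasible. *)

From mathcomp Require Import all_boot all_order all_algebra.
From mathcomp Require Import all_classical all_reals ereal.
From mathcomp Require Import lra.
Import Order.TTheory GRing.Theory Num.Theory.
Local Open Scope ring_scope.
Local Open Scope classical_set_scope.

Set Implicit Arguments.
Unset Strict Implicit.

Section HahnBanachCone.
Variables (R : realType) (V : lmodType R) (B : set V) (q : V -> R) (K : set V).
Hypothesis B_lin : forall a b x y, B x -> B y -> B (a *: x + b *: y).
Hypothesis q_subadd : forall x y, B x -> B y -> q (x + y) <= q x + q y.
Hypothesis q_homo : forall s x, 0 < s -> B x -> q (s *: x) = s * q x.
Hypothesis K_sub : K `<=` B.
Hypothesis K0 : K 0.
Hypothesis K_add : forall x y, K x -> K y -> K (x + y).
Hypothesis K_scale : forall s x, 0 < s -> K x -> K (s *: x).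
Hypothesis q_ge0_cone : forall k, K k -> 0 <= q k.

Let B0 : B 0. Proof. exact: K_sub. Qed.

Let B_add x y : B x -> B y -> B (x + y).
Proof. by move=> Bx By; have := B_lin 1 1 Bx By; rewrite !scale1r. Qed.

Let B_scale s x : B x -> B (s *: x).
Proof. by move=> Bx; have := B_lin s 0 Bx B0; rewrite scaler0 addr0. Qed.

Let B_sub x y : B x -> B y -> B (x - y).
Proof. by move=> Bx By; rewrite -scaleN1r; apply: B_add; last exact: B_scale. Qed.

(* Partial linear functionals are handled through their graphs, so that Zorn's
   lemma can be applied to set inclusion. *)
Definition dominated_graph (G : set (V * R)) :=
  [/\ forall x a, G (x, a) -> B x,
      forall x a b, G (x, a) -> G (x, b) -> a = b,
      forall x a y b, G (x, a) -> G (y, b) -> G (x + y, a + b),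
      forall s x a, G (x, a) -> G (s *: x, s * a)
    & forall x a k, G (x, a) -> K k -> a <= q (x + k)].

Lemma dominated_graph_bigcup (F : set (set (V * R))) :
  F `<=` dominated_graph -> total_on F subset ->
  dominated_graph (\bigcup_(G in F) G).
Proof.
move=> Fdom Ftot; split.
- by move=> x a [G /Fdom[GB _ _ _ _] /GB].
- move=> x a b [G1 /[dup] F1 /Fdom[_ G1fun _ _ _] G1a] [G2 /[dup] F2 /Fdom[_ G2fun _ _ _] G2b].
  have [G12|G21] := Ftot _ _ F1 F2; first exact: G2fun (G12 _ G1a) G2b.
  exact: G1fun G1a (G21 _ G2b).
- move=> x a y b [G1 F1 G1a] [G2 F2 G2b].
  have [G12|G21] := Ftot _ _ F1 F2.
  + have [_ _ G2add _ _] := Fdom _ F2.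
    by exists G2 => //; apply: G2add (G12 _ G1a) G2b.
  + have [_ _ G1add _ _] := Fdom _ F1.
    by exists G1 => //; apply: G1add G1a (G21 _ G2b).
- move=> s x a [G FG Ga]; have [_ _ _ Gscale _] := Fdom _ FG.
  by exists G => //; exact: Gscale.
- by move=> x a k [G FG Ga]; have [_ _ _ _ Gdom] := Fdom _ FG; exact: Gdom.
Qed.

Lemma dominated_graph_origin : dominated_graph [set (0, 0)].
Proof.
split=> [x a [-> _] //|x a b [_ ->] [_ ->] //|x a y b [-> ->] [-> ->]|s x a [-> ->]|x a k [-> ->] Kk].
- by rewrite !addr0.
- by rewrite scaler0 mulr0.
- by rewrite add0r; exact: q_ge0_cone.
Qed.

Lemma dominated_graph_has0 G x a : dominated_graph G -> G (x, a) -> G (0, 0).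
Proof. by move=> [_ _ _ Gscale _] /(Gscale 0); rewrite scale0r mul0r. Qed.

Section OneStepExtension.
Variables (A : set (V * R)) (y : V) (c : R).

Definition graph_extension : set (V * R) :=
  [set p | exists x a t, A (x, a) /\ p = (x + t *: y, a + t * c)].

Hypothesis A_dom : dominated_graph A.
Hypothesis A0 : A (0, 0).
Hypothesis By : B y.
Hypothesis y_notin : ~ exists a, A (y, a).

Lemma graph_extension_proper : A `<` graph_extension.
Proof.
split=> [[x a] Ax|extA]; first by exists x, a, 0; rewrite scale0r mul0r !addr0.
by apply: y_notin; exists c; apply: extA; exists 0, 0, 1; rewrite scale1r mul1r !add0r.
Qed.

Lemma graph_extension_functional x a b :
  graph_extension (x, a) -> graph_extension (x, b) -> a = b.
Proof.
have [_ Afun Aadd Ascale _] := A_dom.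
move=> [x1 [a1 [t1 [Ax1 [-> ->]]]]] [x2 [a2 [t2 [Ax2 [E ->]]]]].
have [t12|t12] := eqVneq t1 t2.
  rewrite -{}t12 in E *; move/addIr: E => x12.
  by rewrite -x12 in Ax2; rewrite (Afun _ _ _ Ax1 Ax2).
(* otherwise [y] would already lie in the domain of [A] *)
exfalso; apply: y_notin; exists ((t1 - t2)^-1 * (a2 - a1)).
have ty : (t1 - t2) *: y = x2 - x1.
  by apply/eqP; rewrite scalerBl subr_eq addrAC -E addrAC subrr add0r.
have -> : y = (t1 - t2)^-1 *: (x2 - x1).
  by rewrite -ty scalerA mulVf ?subr_eq0 // scale1r.
by apply/Ascale/Aadd => //; move/(Ascale (-1)): Ax1; rewrite scaleN1r mulN1r.
Qed.

Hypothesis c_lower : forall x a k, A (x, a) -> K k -> a - q (x - y + k) <= c.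
Hypothesis c_upper : forall x a k, A (x, a) -> K k -> c <= q (x + y + k) - a.

Lemma graph_extension_dominated x a t k :
  A (x, a) -> K k -> a + t * c <= q (x + t *: y + k).
Proof.
have [AB _ _ Ascale Adom] := A_dom; move=> Ax Kk.
have Bz : B (x + t *: y + k) by apply: B_add; [apply: B_add; [exact: AB Ax|exact: B_scale]|exact: K_sub].
(* rescaling by [|t|^-1] reduces the claim to the bound on [c] from the matching side *)
have [t_lt0|t_gt0|->] := ltgtP t 0; last by rewrite mul0r scale0r !addr0; exact: Adom.
- have mt_gt0 : 0 < - t by rewrite oppr_gt0.
  have u_gt0 : 0 < (- t)^-1 by rewrite invr_gt0.
  have := c_lower (Ascale (- t)^-1 _ _ Ax) (K_scale u_gt0 Kk).
  have -> : (- t)^-1 *: x - y + (- t)^-1 *: k = (- t)^-1 *: (x + t *: y + k).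
    by rewrite !scalerDr scalerA invrN mulNr mulVf ?(ltr0_neq0 t_lt0) // scaleN1r.
  rewrite q_homo // => /(ler_wpM2l (ltW mt_gt0)).
  by rewrite mulrBr !mulrA mulfV ?(lt0r_neq0 mt_gt0) // !mul1r mulNr; lra.
- have u_gt0 : 0 < t^-1 by rewrite invr_gt0.
  have := c_upper (Ascale t^-1 _ _ Ax) (K_scale u_gt0 Kk).
  have -> : t^-1 *: x + y + t^-1 *: k = t^-1 *: (x + t *: y + k).
    by rewrite !scalerDr scalerA mulVf ?(lt0r_neq0 t_gt0) // scale1r.
  rewrite q_homo // => /(ler_wpM2l (ltW t_gt0)).
  by rewrite mulrBr !mulrA mulfV ?(lt0r_neq0 t_gt0) // !mul1r; lra.
Qed.

Lemma dominated_graph_extension : dominated_graph graph_extension.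
Proof.
have [AB _ Aadd Ascale _] := A_dom; split.
- by move=> _ _ [x [a [t [Ax [-> _]]]]]; apply: B_add; [exact: AB Ax|exact: B_scale].
- exact: graph_extension_functional.
- move=> _ _ _ _ [x [a [t [Ax [-> ->]]]]] [x' [a' [t' [Ax' [-> ->]]]]].
  exists (x + x'), (a + a'), (t + t'); split; first exact: Aadd.
  by congr (_, _); rewrite addrACA (scalerDl, mulrDl).
- move=> s _ _ [x [a [t [Ax [-> ->]]]]].
  exists (s *: x), (s * a), (s * t); split; first exact: Ascale.
  by rewrite scalerDr scalerA mulrDr mulrA.
- by move=> _ _ k [x [a [t [Ax [-> ->]]]]] Kk; exact: graph_extension_dominated.
Qed.
End OneStepExtension.

Section ExtensionValue.
Variables (A : set (V * R)) (y : V).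
Hypothesis A_dom : dominated_graph A.
Hypothesis A0 : A (0, 0).
Hypothesis By : B y.

Lemma extension_gap x a k x' a' k' : A (x, a) -> K k -> A (x', a') -> K k' ->
  a - q (x - y + k) <= q (x' + y + k') - a'.
Proof.
have [AB _ Aadd _ Adom] := A_dom; move=> Ax Kk Ax' Kk'.
have := Adom _ _ _ (Aadd _ _ _ _ Ax Ax') (K_add Kk Kk').
have -> : x + x' + (k + k') = (x - y + k) + (x' + y + k').
  rewrite !addrA (addrAC (x - y) k x') (addrAC (x - y + x') k y).
  by rewrite (addrAC (x - y) x' y) subrK.
have := q_subadd (B_add (B_sub (AB _ _ Ax) By) (K_sub Kk)) (B_add (B_add (AB _ _ Ax') By) (K_sub Kk')).
lra.
Qed.

Lemma extension_value : exists c,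
  (forall x a k, A (x, a) -> K k -> a - q (x - y + k) <= c) /\
  (forall x a k, A (x, a) -> K k -> c <= q (x + y + k) - a).
Proof.
pose lower := [set r | exists x a k, [/\ A (x, a), K k & r = a - q (x - y + k)]].
have lower_sup : has_sup lower.
  split; first by exists (0 - q (0 - y + 0)), 0, 0, 0.
  exists (q (0 + y + 0) - 0) => _ [x [a [k [Ax Kk ->]]]].
  exact: extension_gap.
exists (sup lower); split=> x a k Ax Kk.
  by apply: sup_upper_bound lower_sup _ _; exists x, a, k.
apply: ge_sup; first by case: lower_sup.
by move=> _ [x' [a' [k' [Ax' Kk' ->]]]]; exact: extension_gap.
Qed.
End ExtensionValue.

Theorem hahn_banach_cone : exists phi : V -> R,
  (forall a b x y, B x -> B y -> phi (a *: x + b *: y) = a * phi x + b * phi y) /\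
  (forall x k, B x -> K k -> phi x <= q (x + k)).
Proof.
have [A [A_dom A_max]] := Zorn_bigcup dominated_graph_bigcup.
have A0 : A (0, 0).
  have [[[x a] Ax]|A_empty] := pselect (exists p, A p).
    exact: dominated_graph_has0 A_dom Ax.
  exfalso; apply: (A_max _ _ dominated_graph_origin); split=> [p Ap|/(_ (0, 0) erefl) A00].
    by exfalso; apply: A_empty; exists p.
  by apply: A_empty; exists (0, 0).
have A_total x : B x -> exists a, A (x, a).
  move=> Bx; apply: contrapT => x_notin.
  have [c [c_lower c_upper]] := extension_value A_dom A0 Bx.
  apply: (A_max (graph_extension A x c)); first exact: graph_extension_proper.
  exact: dominated_graph_extension.
pose phi x := xget 0 (fun a => A (x, a)).
have A_phi x : B x -> A (x, phi x) by move=> /A_total/(xgetPex 0).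
have [_ Afun Aadd Ascale Adom] := A_dom.
exists phi; split=> [a b x y Bx By|x k Bx Kk]; last exact: Adom (A_phi _ Bx) Kk.
apply: Afun (A_phi _ (B_lin a b Bx By)) _.
by apply: Aadd; apply: Ascale; exact: A_phi.
Qed.
End HahnBanachCone.

Section BoundedFunctions.
Variables (R : realType) (T : Type).
Implicit Types (g h : T -> R) (a b r M : R).

Lemma linfty_lin a b g h : linfty g -> linfty h -> linfty (fun t => a * g t + b * h t).
Proof.
move=> [Mg gMg] [Mh hMh]; exists (`|a| * Mg + `|b| * Mh) => t.
by rewrite (le_trans (ler_normD _ _)) // !normrM lerD // ler_wpM2l.
Qed.

Lemma linfty_cst r : linfty (fun _ : T => r).
Proof. by exists `|r|. Qed.

Lemma linfty_scale a h : linfty h -> linfty (fun t => a * h t).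
Proof. by move=> [M hM]; exists (`|a| * M) => t; rewrite normrM ler_wpM2l. Qed.

Lemma linfty_opp h : linfty h -> linfty (fun t => - h t).
Proof. by move=> [M hM]; exists M => t; rewrite normrN. Qed.

Lemma linfty_sum (I : Type) (s : seq I) (c : I -> R) (G : I -> T -> R) :
  (forall i, linfty (G i)) -> linfty (fun t => \sum_(i <- s) c i * G i t).
Proof.
move=> G_bd; elim: s => [|i s IHs]; first by under eq_fun do rewrite big_nil; exact: linfty_cst.
under eq_fun do rewrite big_cons -[X in _ + X]mul1r.
exact: linfty_lin.
Qed.

Definition supf h : R := sup (range h).

Lemma supf_ub h t : linfty h -> h t <= supf h.
Proof.
move=> [M hM]; apply: sup_upper_bound; last by exists t.
split; first by exists (h t), t.
by exists M => _ [t' _ <-]; exact: le_trans (ler_norm _) (hM t').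
Qed.

Variable t0 : T.

Lemma supf_le h M : (forall t, h t <= M) -> supf h <= M.
Proof. by move=> hM; apply: ge_sup; [exists (h t0), t0 | move=> _ [t _ <-]]. Qed.

Lemma supf_add g h : linfty g -> linfty h -> supf (fun t => g t + h t) <= supf g + supf h.
Proof. by move=> g_bd h_bd; apply: supf_le => t; rewrite lerD // supf_ub. Qed.

Lemma supf_scale a h : 0 < a -> linfty h -> supf (fun t => a * h t) = a * supf h.
Proof.
move=> a_gt0 h_bd; apply/le_anti/andP; split.
  by apply: supf_le => t; rewrite ler_pM2l // supf_ub.
rewrite -ler_pdivlMl //; apply: supf_le => t.
by rewrite ler_pdivlMl // supf_ub //; exact: linfty_scale.
Qed.
End BoundedFunctions.

Arguments linfty_cst {R T} r.

Section PositiveFunctionals.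
Variables (R : realType) (T : Type).
Implicit Types (g h : T -> R) (Phi : (T -> R) -> R).

Lemma pos_dual_linfty_sum Phi (I : Type) (s : seq I) (c : I -> R) (G : I -> T -> R) :
  pos_dual_linfty Phi -> (forall i, linfty (G i)) ->
  Phi (fun t => \sum_(i <- s) c i * G i t) = \sum_(i <- s) c i * Phi (G i).
Proof.
move=> [Phi_lin _ _] G_bd; elim: s => [|i s IHs].
  under eq_fun do rewrite big_nil.
  by have := Phi_lin 0 0 _ _ (linfty_cst 0) (linfty_cst 0); rewrite !mul0r addr0 big_nil.
under eq_fun do rewrite big_cons -[X in _ + X]mul1r.
by rewrite Phi_lin ?IHs ?mul1r ?big_cons //; exact: linfty_sum.
Qed.

Lemma pos_dual_linfty_le Phi g r : pos_dual_linfty Phi -> linfty g ->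
  (forall t, g t <= r) -> Phi g <= r * Phi (fun _ => 1).
Proof.
move=> [Phi_lin _ Phi_ge0] g_bd g_le.
have := Phi_ge0 _ (linfty_lin r (-1) (linfty_cst 1) g_bd).
rewrite Phi_lin ?mulN1r ?subr_ge0 //; last exact: linfty_cst.
by apply; move=> t; rewrite mulr1 mulN1r subr_ge0.
Qed.

Lemma linfty_oapp (L : Type) (h : L -> R) r : linfty h -> linfty (oapp h r).
Proof.
move=> [M hM]; exists (`|r| + `|M|) => -[l|] /=; last by rewrite lerDl.
by rewrite (le_trans (hM l)) // (le_trans (ler_norm M)) // lerDr.
Qed.

Lemma pos_dual_linfty_oapp (L : Type) (l0 : L) (Phi : (option L -> R) -> R) :
  pos_dual_linfty Phi -> pos_dual_linfty (fun h : L -> R => Phi (oapp h 0)).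
Proof.
move=> [Phi_lin [C Phi_bd] Phi_ge0]; split.
- move=> a b g h g_bd h_bd; rewrite -Phi_lin; [|exact: linfty_oapp..].
  by congr Phi; apply/funext => -[l|] /=; rewrite ?mulr0 ?addr0.
- exists C => g M g_bd gM; apply: Phi_bd; first exact: linfty_oapp.
  by case=> [l|] //=; rewrite normr0 (le_trans _ (gM l0)).
- by move=> g g_bd g_ge0; apply: Phi_ge0; [exact: linfty_oapp | case].
Qed.

Section DominatedFunctional.
Variable phi : (T -> R) -> R.
Hypothesis phi_lin : forall a b g h, linfty g -> linfty h ->
  phi (fun t => a * g t + b * h t) = a * phi g + b * phi h.
Hypothesis phi_le : forall h M, linfty h -> (forall t, h t <= M) -> phi h <= M.

Lemma dominated_opp h : linfty h -> phi (fun t => - h t) = - phi h.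
Proof.
move=> h_bd; have := phi_lin (-1) 0 h_bd h_bd.
by rewrite mulN1r mul0r addr0; under eq_fun do rewrite mulN1r mul0r addr0.
Qed.

Lemma dominated_ge h M : linfty h -> (forall t, M <= h t) -> M <= phi h.
Proof.
move=> h_bd Mh; rewrite -lerN2 -dominated_opp //.
by apply: phi_le => [|t]; [exact: linfty_opp | rewrite lerN2].
Qed.

Lemma dominated_cst1 : phi (fun _ => 1) = 1.
Proof.
by apply/le_anti; rewrite phi_le ?dominated_ge //; exact: linfty_cst.
Qed.

Lemma dominated_pos_dual : pos_dual_linfty phi.
Proof.
split=> [||h h_bd h_ge0]; [exact: phi_lin | | exact: dominated_ge].
exists 1 => h M h_bd hM; rewrite mul1r ler_norml.
have h_le t : - M <= h t <= M by rewrite -ler_norml.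
by rewrite dominated_ge ?phi_le // => t; have /andP[] := h_le t.
Qed.
End DominatedFunctional.
End PositiveFunctionals.

Section ConicHull.
Variables (R : numDomainType) (V : lmodType R) (X : Type) (G : X -> V).

Definition conic_hull : set V :=
  [set k | exists2 s : seq (R * X), all (fun p => 0 < p.1) s &
                                   k = \sum_(p <- s) p.1 *: G p.2].

Lemma conic_hull0 : conic_hull 0.
Proof. by exists [::]; rewrite ?big_nil. Qed.

Lemma conic_hull_gen x : conic_hull (G x).
Proof. by exists [:: (1, x)]; rewrite /= ?ltr01 ?big_seq1 ?scale1r. Qed.

Lemma conic_hullD k k' : conic_hull k -> conic_hull k' -> conic_hull (k + k').
Proof.
by move=> [s s_pos ->] [s' s'_pos ->]; exists (s ++ s'); rewrite ?all_cat ?s_pos ?big_cat.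
Qed.

Lemma conic_hullZ a k : 0 < a -> conic_hull k -> conic_hull (a *: k).
Proof.
move=> a_gt0 [s s_pos ->]; exists [seq (a * p.1, p.2) | p <- s].
  by rewrite all_map; apply: sub_all s_pos => p /= /(mulr_gt0 a_gt0).
by rewrite big_map scaler_sumr; apply: eq_bigr => p _; rewrite scalerA.
Qed.

Lemma conic_hull_sub (B : set V) : (forall a b x y, B x -> B y -> B (a *: x + b *: y)) ->
  B 0 -> (forall x, B (G x)) -> conic_hull `<=` B.
Proof.
move=> B_lin B0 BG _ [s _ ->]; elim: s => [|p s IHs]; first by rewrite big_nil.
by rewrite big_cons -[X in _ + X]scale1r; apply: B_lin.
Qed.
End ConicHull.

Lemma infsup_convex_conic_ge0 (R : realType) (I X : Type) (g : I -> X -> R)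
    (s : seq (R * X)) (r : R) :
  infsup_convex g ->
  (0 <= ereal_inf [set ereal_sup [set (g i x)%:E | i in [set: I]] | x in [set: X]])%E ->
  s <> [::] -> all (fun p => 0 < p.1) s ->
  (forall i, \sum_(p <- s) p.1 * g i p.2 <= r) -> 0 <= r.
Proof.
move=> g_isc infsup_ge0; case: s => [/(_ erefl)//|p0 s'] _ s_pos r_ub; set s := p0 :: s' in s_pos r_ub *.
have sum_nth (F : R * X -> R) : \sum_(j < size s) F (nth p0 s j) = \sum_(p <- s) F p.
  by rewrite (big_nth p0) big_mkord.
have w_gt0 (j : 'I_(size s)) : 0 < (nth p0 s j).1 by apply/(all_nthP p0 s_pos)/ltn_ord.
set S := \sum_(p <- s) p.1.
have S_gt0 : 0 < S.
  rewrite /S -sum_nth /= big_ord_recl ltr_pwDl ?w_gt0 // sumr_ge0 // => j _.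
  exact/ltW/w_gt0.
have := g_isc (size s) (fun j => (nth p0 s j).1 / S) (fun j => (nth p0 s j).2) erefl.
rewrite -mulr_suml (sum_nth fst) mulfV ?(lt0r_neq0 S_gt0) // => /(_ _ erefl) sup_ge.
have {sup_ge} : (0 <= (S^-1 * r)%:E)%E.
  apply: le_trans infsup_ge0 (le_trans (sup_ge _) _).
    by move=> j; rewrite divr_ge0 ?ltW ?w_gt0.
  apply: ge_ereal_sup => _ [i _ <-]; rewrite lee_fin.
  under eq_bigr do rewrite mulrAC.
  by rewrite -mulr_suml (sum_nth (fun p => p.1 * g i p.2)) mulrC ler_pM2l ?invr_gt0.
by rewrite lee_fin pmulr_rge0 // invr_gt0.
Qed.

Lemma ereal_sup_range_ge (R : realType) (I : Type) (i0 : I) (v : I -> R) (a : R) :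
  (forall r, (forall i, v i <= r) -> a <= r) ->
  (a%:E <= ereal_sup [set (v i)%:E | i in [set: I]])%E.
Proof.
have v_le i : ((v i)%:E <= ereal_sup [set (v i)%:E | i in [set: I]])%E.
  by apply: ereal_sup_ubound; exists i.
move: v_le; case: ereal_sup => [r v_le a_le | _ _ | /(_ i0)] //; last exact: leey.
by rewrite lee_fin; apply: a_le => i; rewrite -lee_fin.
Qed.

Section LagrangeMultipliers.
Variables (R : realType) (X L : Type) (f : X -> R) (fl : L -> X -> R) (x0 : X).
Hypothesis x0_feas : feasible fl x0.
Hypothesis fl_bd : forall x, linfty (fun l => fl l x).

Local Notation g := (adjoin_family fl f x0).
Local Notation infsup :=
  (ereal_inf [set ereal_sup [set (g i x)%:E | i in [set: option L]] | x in [set: X]]).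

Lemma adjoin_infsup_le0 : (infsup <= 0)%E.
Proof.
apply: (@le_trans _ _ (ereal_sup [set (g i x0)%:E | i in [set: option L]])).
  by apply: ereal_inf_lbound; exists x0.
apply: ge_ereal_sup => _ [[l|] _ <-] /=; last by rewrite subrr.
by apply: le_trans x0_feas; apply: ereal_sup_ubound; exists l.
Qed.

Lemma linfty_adjoin x : linfty (fun i => g i x).
Proof.
have [M fl_le] := fl_bd x; exists (`|f x - f x0| + `|M|) => -[l|] /=.
  by rewrite (le_trans (fl_le l)) // (le_trans (ler_norm M)) // lerDr.
by rewrite lerDl.
Qed.

Section Sufficiency.
Variables (rho : R) (Phi0 : (L -> R) -> R).
Hypothesis rho_ge0 : 0 <= rho.
Hypothesis Phi0_pos : pos_dual_linfty Phi0.
Hypothesis normalized : rho + Phi0 (fun _ => 1) = 1.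
Hypothesis x0_min : forall x, rho * f x0 + Phi0 (fun l => fl l x0)
                              <= rho * f x + Phi0 (fun l => fl l x).
Hypothesis slack : Phi0 (fun l => fl l x0) = 0.

Lemma multipliers_infsup_convex : infsup_convex g.
Proof.
move=> m t xs _ t_ge0 t_sum1; apply: le_trans adjoin_infsup_le0 _.
apply: (ereal_sup_range_ge None) => r /= r_ub.
have Phi0_sum := pos_dual_linfty_sum (index_enum 'I_m) t Phi0_pos (fun j => fl_bd (xs j)).
have lagrangian_ge0 : 0 <= rho * (\sum_(j < m) t j * (f (xs j) - f x0))
                           + Phi0 (fun l => \sum_(j < m) t j * fl l (xs j)).
  rewrite Phi0_sum mulr_sumr -big_split sumr_ge0 // => j _ /=.
  rewrite mulrCA -mulrDr mulr_ge0 // mulrBr; have := x0_min (xs j); rewrite slack; lra.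
have lagrangian_le : rho * (\sum_(j < m) t j * (f (xs j) - f x0))
                     + Phi0 (fun l => \sum_(j < m) t j * fl l (xs j)) <= r.
  rewrite -[leRHS]mulr1 -normalized mulrDr [r * rho]mulrC lerD ?ler_wpM2l ?(r_ub None) //.
  apply: pos_dual_linfty_le Phi0_pos (linfty_sum _ _ (fun j => fl_bd (xs j))) _.
  exact: (fun l => r_ub (Some l)).
exact: le_trans lagrangian_ge0 lagrangian_le.
Qed.
End Sufficiency.

Section DominatedMultipliers.
Variable phi : (option L -> R) -> R.
Hypothesis phi_lin : forall a b h h', linfty h -> linfty h' ->
  phi (fun o => a * h o + b * h' o) = a * phi h + b * phi h'.
Hypothesis phi_le : forall h M, linfty h -> (forall o, h o <= M) -> phi h <= M.
Hypothesis phi_adjoin_ge0 : forall x, 0 <= phi (fun i => g i x).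

Let rho := phi (oapp (fun _ => 0) 1).
Let Phi0 (h : L -> R) := phi (oapp h 0).

Let e_bd : linfty (oapp (fun _ : L => 0 : R) 1).
Proof. by apply: linfty_oapp; exact: linfty_cst. Qed.

Let lagrangian_ge0 x : 0 <= (f x - f x0) * rho + Phi0 (fl^~ x).
Proof.
have := phi_adjoin_ge0 x.
have -> : (fun i => g i x) = fun o => (f x - f x0) * oapp (fun _ => 0) 1 o + 1 * oapp (fl^~ x) 0 o.
  by apply/funext => -[l|] /=; rewrite ?mulr0 ?add0r ?mul1r ?mulr1 ?addr0.
by rewrite phi_lin ?mul1r; [exact | exact: e_bd | exact: linfty_oapp].
Qed.

Let slack : Phi0 (fl^~ x0) = 0.
Proof.
apply/le_anti; rewrite phi_le /=; first by have := lagrangian_ge0 x0; rewrite subrr mul0r add0r.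
  exact: linfty_oapp.
case=> [l|//]; rewrite -lee_fin; apply: le_trans x0_feas.
by apply: ereal_sup_ubound; exists l.
Qed.

Lemma dominated_multipliers (l0 : L) : exists (rho : R) (Phi0 : (L -> R) -> R),
  [/\ 0 <= rho, pos_dual_linfty Phi0, rho + Phi0 (fun _ => 1) = 1,
      (forall x, rho * f x0 + Phi0 (fun l => fl l x0) <= rho * f x + Phi0 (fun l => fl l x))
    & Phi0 (fun l => fl l x0) = 0].
Proof.
exists rho, Phi0; split => [|||x|]; last exact: slack.
- by apply: (dominated_ge phi_lin phi_le) => // -[].
- apply: (pos_dual_linfty_oapp l0 (Phi := phi)).
  exact: dominated_pos_dual phi_lin phi_le.
- rewrite -[rho]mul1r -[Phi0 _]mul1r -phi_lin; last 2 first.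
  + exact: e_bd.
  + by apply: linfty_oapp; exact: linfty_cst.
  rewrite -[RHS](dominated_cst1 phi_lin phi_le); congr phi.
  by apply/funext => -[l|] /=; rewrite ?mulr0 ?add0r ?mul1r ?mulr1 ?addr0.
- by have := lagrangian_ge0 x; rewrite slack addr0 mulrBl ![_ * rho]mulrC; lra.
Qed.
End DominatedMultipliers.

Section Necessity.
Hypothesis x0_opt : (f x0)%:E = ereal_inf [set (f x)%:E | x in feasible fl].
Hypothesis g_isc : infsup_convex g.

Lemma adjoin_infsup_ge0 : (0 <= infsup)%E.
Proof.
apply/ereal_infP => _ [x _ <-].
have [x_feas|x_infeas] := pselect (feasible fl x).
  have : ((f x0)%:E <= (f x)%:E)%E by rewrite x0_opt; apply: ereal_inf_lbound; exists x.
  rewrite lee_fin -subr_ge0 -lee_fin => /le_trans; apply.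
  by apply: ereal_sup_ubound; exists None.
have : (0 < ereal_sup [set (fl l x)%:E | l in [set: L]])%E by rewrite ltNge; apply/negP.
move=> /ltW /le_trans; apply; apply: ereal_sup_le => _ [l _ <-].
by exists (Some l).
Qed.

Local Notation V := (option L -> R^o).
Let G (x : X) : V := fun i => g i x.

Let linfty_linV a b (x y : V) : linfty x -> linfty y -> linfty (a *: x + b *: y).
Proof. exact: linfty_lin. Qed.

Let linfty_conic : conic_hull G `<=` linfty.
Proof. exact: conic_hull_sub linfty_linV (linfty_cst 0) linfty_adjoin. Qed.

Let supf_conic_ge0 k : conic_hull G k -> 0 <= supf k.
Proof.
move=> kG; have k_bd := linfty_conic kG.
case: kG k_bd => -[|p s] s_pos -> k_bd.
  by rewrite big_nil; apply: (supf_ub None); exact: linfty_cst.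
apply: infsup_convex_conic_ge0 g_isc adjoin_infsup_ge0 _ s_pos _ => // i.
by apply: le_trans (supf_ub i k_bd); rewrite fct_sumE.
Qed.

Lemma infsup_convex_multipliers (l0 : L) : exists (rho : R) (Phi0 : (L -> R) -> R),
  [/\ 0 <= rho, pos_dual_linfty Phi0, rho + Phi0 (fun _ => 1) = 1,
      (forall x, rho * f x0 + Phi0 (fun l => fl l x0) <= rho * f x + Phi0 (fun l => fl l x))
    & Phi0 (fun l => fl l x0) = 0].
Proof.
have [phi [phi_lin phi_dom]] := @hahn_banach_cone R V linfty (@supf R _) (conic_hull G)
  linfty_linV (supf_add None) (supf_scale None) linfty_conic
  (conic_hull0 G) (@conic_hullD _ _ _ G) (@conic_hullZ _ _ _ G) supf_conic_ge0.
have phi_le h M : linfty h -> (forall o, h o <= M) -> phi h <= M.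
  move=> h_bd hM; apply: le_trans (phi_dom h 0 h_bd (conic_hull0 G)) _.
  by rewrite addr0; exact: (supf_le None hM).
apply: (dominated_multipliers (phi := phi)) phi_le _ l0 => [a b h h'|x]; first exact: phi_lin.
rewrite -oppr_le0 -(dominated_opp (phi := phi) phi_lin (linfty_adjoin x)).
have := phi_dom (- G x) (G x) (linfty_opp (linfty_adjoin x)) (conic_hull_gen G x).
by rewrite addNr => /le_trans; apply; apply: (supf_le None).
Qed.
End Necessity.
End LagrangeMultipliers.

Unset Implicit Arguments.

Theorem theorem4p5 (R : realType) (X L : Type) (xi : X) (l0 : L)
  (f : X -> R) (fl : L -> X -> R) (x0 : X) :
  feasible fl x0 ->
  (f x0)%:E = ereal_inf [set (f x)%:E | x in feasible fl] ->
  (forall x, linfty (fun l => fl l x)) ->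
  ((exists (rho : R) (Phi0 : (L -> R) -> R),
      [/\ 0 <= rho, pos_dual_linfty Phi0, rho + Phi0 (fun _ => 1) = 1,
          (forall x, rho * f x0 + Phi0 (fun l => fl l x0)
                     <= rho * f x + Phi0 (fun l => fl l x))
        & Phi0 (fun l => fl l x0) = 0])
   <-> infsup_convex (adjoin_family fl f x0)).
Proof.
move=> x0_feas x0_opt fl_bd; split=> [[rho [Phi0 [rho_ge0 Phi0_pos normalized x0_min slack]]]|g_isc].
  exact: (multipliers_infsup_convex x0_feas fl_bd rho_ge0 Phi0_pos normalized x0_min slack).
exact: (infsup_convex_multipliers x0_feas fl_bd x0_opt g_isc l0).
Qed.
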